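(* A finite-dimensional complex Lie algebra $\mathfrak{g}$ admits a periodic prederivation of odd order if and only if $\mathfrak{g}$ is nilpotent of class at most two, i.e. $[\mathfrak{g},[\mathfrak{g},\mathfrak{g}]]=0$.
   Context: A linear map $P:\mathfrak{g}\to\mathfrak{g}$ is a prederivation if $P([x,[y,z]])=[P(x),[y,z]]+[x,[P(y),z]]+[x,[y,P(z)]]$ for all $x,y,z\in\mathfrak{g}$. It is periodic if $P^m=\mathrm{id}$ for some integer $m\ge 1$; its order is the smallest such $m$. *)

From HB Require Import structures.
From mathcomp Require Import all_boot all_order all_algebra.
From mathcomp Require Import complex reals.
Set Implicit Arguments. Unset Strict Implicit. Unset Printing Implicit Defensive.
Import Order.TTheory GRing.Theory Num.Theory.
Local Open Scope ring_scope.

Definition lie_bracket (K : fieldType) (V : lmodType K) (br : V -> V -> V) : Prop :=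
  [/\ (forall (a : K) (x y z : V), br (a *: x + y) z = a *: br x z + br y z),
      (forall (a : K) (x y z : V), br x (a *: y + z) = a *: br x y + br x z),
      (forall x : V, br x x = 0) &
      (forall x y z : V, br x (br y z) + br y (br z x) + br z (br x y) = 0)].

Definition prederivation (K : fieldType) (V : lmodType K) (br : V -> V -> V)
    (P : V -> V) : Prop :=
  (forall (a : K) (x y : V), P (a *: x + y) = a *: P x + P y) /\
  (forall x y z : V,
     P (br x (br y z)) = br (P x) (br y z) + br x (br (P y) z) + br x (br y (P z))).

Definition periodic_of_order (T : Type) (P : T -> T) (m : nat) : Prop :=
  (0 < m)%N /\ (forall x, iter m P x = x) /\
  (forall k, (0 < k < m)%N -> ~ (forall x, iter k P x = x)).

From HB Require Import structures.
From mathcomp Require Import all_boot all_order all_algebra.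
From mathcomp Require Import cyclic separable cyclotomic.
From mathcomp Require Import complex reals ring.
Set Implicit Arguments. Unset Strict Implicit. Unset Printing Implicit Defensive.
Import GRing.Theory Num.Theory.
Local Open Scope ring_scope.

(* If P^m = id with m odd, averaging the orbit of x against the powers of a
   primitive m-th root of unity (a discrete Fourier transform) writes x as a
   sum of eigenvectors of P whose eigenvalues are m-th roots of unity.  For
   eigenvectors u, v, w with eigenvalues a, b, c, the prederivation rule makes
   [u,[v,w]] an eigenvector for a + b + c, so if it is nonzero then a + b + c
   is again an m-th root of unity.  Roots of unity have modulus one, so
   1/a + 1/b + 1/c = 1/(a + b + c), i.e. (d - a)(d - b)(d - c) = 0 for
   d = a + b + c: two of a, b, c are opposite, whence (-1)^m = 1, contradicting
   the oddness of m.  Trilinearity then kills every [x,[y,z]].  Conversely, on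
   a 2-step nilpotent algebra the identity is a prederivation of order 1. *)

Lemma closed_prim_root_exists (K : closedFieldType) n :
  n%:R != 0 :> K -> exists z : K, n.-primitive_root z.
Proof.
move=> n_neq0; have n_gt0 : (0 < n)%N by rewrite lt0n; apply: contraNneq n_neq0 => ->.
pose p : {poly K} := 'X^n - 1; have [r Dp] := closed_field_poly_normal p.
rewrite (monicP _) ?monicXnsubC // scale1r in Dp.
have rn1 : all n.-unity_root r by apply/allP=> z; rewrite -root_prod_XsubC -Dp.
have sz_r : (n < (size r).+1)%N by rewrite -(size_prod_XsubC r id) -Dp size_XnsubC.
have [|z _] := hasP (has_prim_root n_gt0 rn1 _ sz_r); last by exists z.
by rewrite -separable_prod_XsubC -Dp separable_Xn_sub_1.
Qed.

Lemma sum_ord_shift (V : zmodType) n (f : nat -> V) :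
  f n = f 0%N -> \sum_(i < n) f i.+1 = \sum_(i < n) f i.
Proof.
move=> fn; apply: (addrI (f 0%N)).
rewrite -(big_mkord xpredT (fun i => f i.+1)) -(big_mkord xpredT f).
by rewrite -big_nat_recl // big_nat_recr //= fn addrC.
Qed.

Lemma prim_root_sum_exp (R : idomainType) n (z : R) k : n.-primitive_root z ->
  \sum_(j < n) z ^+ (j * k) = if (n %| k)%N then n%:R else 0.
Proof.
move=> z_prim; under eq_bigr do rewrite mulnC exprM.
rewrite (prim_order_dvd z_prim); case: eqP => [-> | /eqP zk1].
  by rewrite (eq_bigr (fun=> 1)) => [|j _]; rewrite ?expr1n // sumr_const card_ord.
have /eqP := subrX1 (z ^+ k) n.
rewrite -exprM mulnC exprM (prim_expr_order z_prim) expr1n subrr eq_sym mulf_eq0.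
by rewrite subr_eq0 (negbTE zk1) => /eqP.
Qed.

Section PeriodicLinearMap.
Variables (K : fieldType) (V : lmodType K) (P : {linear V -> V}).

Lemma iter_eigenvector k a v : P v = a *: v -> iter k P v = a ^+ k *: v.
Proof.
move=> Pv; elim: k => [|k /= ->]; first by rewrite expr0 scale1r.
by rewrite linearZ /= Pv scalerA exprSr.
Qed.

Lemma periodic_eigenvalue m a v : (forall x, iter m P x = x) ->
  P v = a *: v -> v != 0 -> a ^+ m = 1.
Proof.
move=> Pm Pv v_neq0; apply/eqP; rewrite -subr_eq0.
have : (a ^+ m - 1) *: v == 0 by rewrite scalerBl -iter_eigenvector // Pm scale1r subrr.
by rewrite scaler_eq0 (negbTE v_neq0) orbF.
Qed.

Variables (m : nat) (z : K).
Hypotheses (Pm : forall x, iter m P x = x) (z_prim : m.-primitive_root z).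

Definition eigenproj (j : nat) (x : V) : V :=
  m%:R^-1 *: \sum_(k < m) z ^+ (j * k) *: iter k P x.

Lemma eigenprojP j x : P (eigenproj j x) = (z ^+ j)^-1 *: eigenproj j x.
Proof.
have zj_neq0 : z ^+ j != 0.
  by rewrite expf_neq0 // (prim_root_eq0 z_prim) -lt0n (prim_order_gt0 z_prim).
apply: (scalerI zj_neq0); rewrite scalerA divff // scale1r.
rewrite /eigenproj linearZ linear_sum /=.
rewrite scalerA mulrC -scalerA; congr (_ *: _); rewrite scaler_sumr.
rewrite -(@sum_ord_shift _ _ (fun k => z ^+ (j * k) *: iter k P x)); last first.
  by rewrite Pm muln0 mulnC exprM (prim_expr_order z_prim) expr1n expr0.
by apply: eq_bigr => k _; rewrite linearZ /= scalerA -exprD mulnS.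
Qed.

Lemma sum_eigenproj x : \sum_(j < m) eigenproj j x = x.
Proof.
have m_gt0 := prim_order_gt0 z_prim.
rewrite -scaler_sumr exchange_big /=.
under eq_bigr do rewrite -scaler_suml prim_root_sum_exp //.
rewrite (bigD1 (Ordinal m_gt0)) //= dvdn0 big1 ?addr0 => [|k k_neq0].
  by rewrite scalerA mulVf ?scale1r // (prim_root_natf_neq0 z_prim).
case: ifP => [|_]; last exact: scale0r.
rewrite /dvdn modn_small // => /eqP k_eq0.
by case/eqP: k_neq0; apply: val_inj.
Qed.

End PeriodicLinearMap.

Lemma unity_root_neq0 (R : idomainType) m (a : R) : (0 < m)%N -> a ^+ m = 1 -> a != 0.
Proof.
by move=> m_gt0 am; apply: contra_eq_neq am => ->; rewrite expr0n gtn_eqF // eq_sym oner_neq0.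
Qed.

Lemma odd_unity_root_addr_neq0 (R : numDomainType) m (b c : R) :
  odd m -> b ^+ m = 1 -> c ^+ m = 1 -> b + c != 0.
Proof.
move=> m_odd bm cm; rewrite addr_eq0; apply: contra_eq_neq bm => ->.
rewrite exprNn cm mulr1 -signr_odd m_odd expr1.
by rewrite -subr_eq0 -opprD oppr_eq0 -mulr2n pnatr_eq0.
Qed.

Lemma unity_root_invC (C : numClosedFieldType) m (a : C) :
  (0 < m)%N -> a ^+ m = 1 -> a^-1 = a^*.
Proof.
move=> m_gt0 am; have a1 : `|a| = 1.
  by apply/eqP; rewrite -(pexpr_eq1 m_gt0) // -normrX am normr1.
by rewrite invC_norm a1 expr1n invr1 mul1r.
Qed.

Lemma odd_unity_root_add3_neq1 (C : numClosedFieldType) m (a b c : C) : odd m ->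
  a ^+ m = 1 -> b ^+ m = 1 -> c ^+ m = 1 -> (a + b + c) ^+ m != 1.
Proof.
move=> m_odd am bm cm; have m_gt0 : (0 < m)%N by case: (m) m_odd.
apply/negP => /eqP dm; set d := a + b + c in dm.
have [[[a0 b0] c0] d0] := (unity_root_neq0 m_gt0 am, unity_root_neq0 m_gt0 bm,
                           unity_root_neq0 m_gt0 cm, unity_root_neq0 m_gt0 dm).
have inv_d : d^-1 = a^-1 + b^-1 + c^-1.
  by rewrite !(unity_root_invC m_gt0) // /d !rmorphD.
have : (d - a) * (d - b) * (d - c) == 0.
  have -> : (d - a) * (d - b) * (d - c) = a * b * c * d * (a^-1 + b^-1 + c^-1 - d^-1).
    by rewrite /d; field; rewrite a0 b0 c0 -/d d0.
  by rewrite inv_d subrr mulr0.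
rewrite !mulf_eq0 !subr_eq0 -orbA /d => /or3P[] /eqP.
- rewrite -addrA -{2}[a]addr0 => /addrI /eqP.
  exact: (negP (odd_unity_root_addr_neq0 m_odd bm cm)).
- rewrite addrAC -{2}[b]add0r => /addIr /eqP.
  exact: (negP (odd_unity_root_addr_neq0 m_odd am cm)).
- rewrite -{2}[c]add0r => /addIr /eqP.
  exact: (negP (odd_unity_root_addr_neq0 m_odd am bm)).
Qed.

Lemma prederivation_eigenvectors (K : fieldType) (V : lmodType K)
    (br : {bilinear V -> V -> V}) (P : V -> V) u v w a b c :
  prederivation br P -> P u = a *: u -> P v = b *: v -> P w = c *: w ->
  P (br u (br v w)) = (a + b + c) *: br u (br v w).
Proof.
move=> [_ Pbr] Pu Pv Pw; rewrite Pbr Pu Pv Pw.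
by rewrite !linearZl_LR !linearZr_LR !scalerDl.
Qed.

Lemma odd_periodic_prederivation_nil2 (C : numClosedFieldType) (V : lmodType C)
    (br : {bilinear V -> V -> V}) (P : {linear V -> V}) m :
  prederivation br P -> odd m -> (forall x, iter m P x = x) ->
  forall x y z, br x (br y z) = 0.
Proof.
move=> Pder m_odd Pm x y z.
have [r r_prim] : exists r : C, m.-primitive_root r.
  by apply: closed_prim_root_exists; rewrite pnatr_eq0; case: (m) m_odd.
pose E := eigenproj P m r.
have E_unity j : ((r ^+ j)^-1) ^+ m = 1.
  by rewrite exprVn -exprM mulnC exprM (prim_expr_order r_prim) expr1n invr1.
have E_bracket i j k u v w : br (E i u) (br (E j v) (E k w)) = 0.
  apply/eqP/contraT => t_neq0.
  have := odd_unity_root_add3_neq1 m_odd (E_unity i) (E_unity j) (E_unity k).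
  rewrite (periodic_eigenvalue Pm _ t_neq0) ?eqxx //.
  by apply: prederivation_eigenvectors; rewrite ?eigenprojP.
rewrite -(sum_eigenproj P r_prim x) -(sum_eigenproj P r_prim y).
rewrite -(sum_eigenproj P r_prim z) linear_sumlz linear_sumr big1 // => i _.
rewrite linear_sumr big1 // => k _.
rewrite linear_sumlz linear_sumr; apply: big1 => j _.
exact: E_bracket.
Qed.

Lemma prederivation_id (K : fieldType) (V : lmodType K) (br : V -> V -> V) :
  (forall x y z, br x (br y z) = 0) -> prederivation br id.
Proof. by move=> nil2; split=> // x y z; rewrite !nil2 !addr0. Qed.

Lemma periodic_of_order1 (T : Type) : periodic_of_order (@id T) 1.
Proof. by do 2!split=> //; case=> [|[]]. Qed.

Theorem proposition5p5 (R : realType) (V : vectType R[i]) (br : V -> V -> V) :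
  lie_bracket br ->
  ((exists (P : V -> V) (m : nat),
      prederivation br P /\ periodic_of_order P m /\ odd m)
   <-> (forall x y z : V, br x (br y z) = 0)).
Proof.
case=> br_linl br_linr _ _; split=> [[P [m [Pder [[_ [Pm _]] m_odd]]]] | nil2].
  pose B : {bilinear V -> V -> V} :=
    HB.pack br (bilinear_isBilinear.Build _ _ _ _ _ _ br
                  (fun w a u v => br_linl a u v w, fun u a => br_linr a u)).
  pose L : {linear V -> V} := HB.pack P (GRing.isLinear.Build _ _ _ _ P Pder.1).
  exact: (@odd_periodic_prederivation_nil2 _ _ B L m Pder m_odd Pm).
by exists id, 1%N; split; [exact: prederivation_id | split; [exact: periodic_of_order1 |]].
Qed.
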